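(* Let $\vec{\mathcal{X}}=(\mathcal{X}_0,\mathcal{X}_1)$ be a couple of rotation invariant pseudolattices and let $\vec B=(B_0,B_1)$ be a complex Banach couple. Then for every $s\in\mathbb{A}$: (i) if $f\in\mathcal{F}_{\vec{\mathcal{X}}}(\vec B)$, then $f(s)\in\vec B_{\vec{\mathcal{X}},|s|}$; (ii) if $x\in\vec B_{\vec{\mathcal{X}},|s|}$, then there exists $f\in\mathcal{F}_{\vec{\mathcal{X}}}(\vec B)$ with $f(s)=x$; (iii) $\vec B_{\vec{\mathcal{X}},s}=\vec B_{\vec{\mathcal{X}},|s|}$ with equality of norms.
   Context: A pseudolattice $\mathcal{X}$ assigns to every complex Banach space $B$ a Banach space $\mathcal{X}(B)$ of two-sided sequences $\{b_n\}_{n\in\mathbb{Z}}$ in $B$ such that: if $A$ is a closed subspace of $B$ then $\mathcal{X}(A)$ is a closed subspace of $\mathcal{X}(B)$; there is $C=C(\mathcal X)>0$ with $\|\{Ta_n\}\|_{\mathcal{X}(B)}\le C\|T\|_{A\to B}\|\{a_n\}\|_{\mathcal{X}(A)}$ for all bounded linear $T:A\to B$ and $\{a_n\}\in\mathcal X(A)$; and $\|b_m\|_B\le\|\{b_n\}\|_{\mathcal{X}(B)}$ for all $m$. A couple $(\mathcal X_0,\mathcal X_1)$ is rotation invariant if for every real $\tau$ and every Banach space $B$ the map $\{b_n\}\mapsto\{e^{in\tau}b_n\}$ is an isometry of $\mathcal X_j(B)$ onto itself, $j=0,1$. For a Banach couple $\vec B=(B_0,B_1)$, $\mathcal{J}(\vec{\mathcal{X}},\vec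 B)$ is the Banach space of sequences $\{b_n\}_{n\in\mathbb Z}\subset B_0\cap B_1$ with $\{b_n\}\in\mathcal{X}_0(B_0)$ and $\{e^nb_n\}\in\mathcal{X}_1(B_1)$, normed by $\max\{\|\{b_n\}\|_{\mathcal{X}_0(B_0)},\|\{e^nb_n\}\|_{\mathcal{X}_1(B_1)}\}$. Let $\mathbb{A}=\{z\in\mathbb{C}:1<|z|<e\}$. For $s\in\mathbb{A}$, $\vec B_{\vec{\mathcal{X}},s}$ is the space of all $b=\sum_{n\in\mathbb Z}s^nb_n$ (convergence in $B_0+B_1$) with $\{b_n\}\in\mathcal{J}(\vec{\mathcal{X}},\vec B)$, normed by the infimum of $\|\{b_n\}\|_{\mathcal J(\vec{\mathcal X},\vec B)}$ over all such representations. $\mathcal{F}_{\vec{\mathcal{X}}}(\vec B)$ denotes the Banach space of analytic functions $f:\mathbb{A}\to B_0+B_1$ of the form $f(z)=\sum_{n\in\mathbb Z}z^nb_n$ with $\{b_n\}\in\mathcal{J}(\vec{\mathcal{X}},\vec B)$, normed by $\|f\|=\|\{b_n\}\|_{\mathcal{J}(\vec{\mathcal{X}},\vec B)}$. *)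

From Stdlib Require Import Reals ZArith.
From Coquelicot Require Import Coquelicot.
Open Scope R_scope.

Notation Banach := (CompleteNormedModule C_AbsRing).

Definition is_linear {A B : ModuleSpace C_Ring} (T : A -> B) : Prop :=
  (forall x y, T (plus x y) = plus (T x) (T y)) /\
  (forall (c : C) x, T (scal c x) = scal c (T x)).

Definition Zpow (s : C) (n : Z) : C :=
  match n with
  | Z0 => 1%C
  | Zpos p => pow_n (K := C_Ring) s (Pos.to_nat p)
  | Zneg p => Cinv (pow_n (K := C_Ring) s (Pos.to_nat p))
  end.

Definition cis (t : R) : C := (cos t, sin t).

Definition seqZ (B : Type) := Z -> B.

(* Pseudolattice: to every complex Banach space B a Banach space X(B) of
   two-sided sequences in B, given by a membership predicate and a norm
   (the norm is only meaningful on members). *)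
Record pseudolattice := {
  pl_mem  : forall B : Banach, seqZ B -> Prop;
  pl_norm : forall B : Banach, seqZ B -> R;
  pl_mem_zero : forall B : Banach, pl_mem B (fun _ => zero);
  pl_mem_plus : forall (B : Banach) a b, pl_mem B a -> pl_mem B b ->
      pl_mem B (fun n => plus (a n) (b n));
  pl_mem_scal : forall (B : Banach) (c : C) a, pl_mem B a -> pl_mem B (fun n => scal c (a n));
  pl_norm_triangle : forall (B : Banach) a b, pl_mem B a -> pl_mem B b ->
      pl_norm B (fun n => plus (a n) (b n)) <= pl_norm B a + pl_norm B b;
  pl_norm_scal : forall (B : Banach) (c : C) a, pl_mem B a ->
      pl_norm B (fun n => scal c (a n)) = Cmod c * pl_norm B a;
  pl_norm_definite : forall (B : Banach) a, pl_mem B a -> pl_norm B a = 0 ->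
      a = (fun _ => zero);
  pl_complete : forall (B : Banach) (u : nat -> seqZ B), (forall k, pl_mem B (u k)) ->
      (forall eps, 0 < eps -> exists N, forall p q, (N <= p)%nat -> (N <= q)%nat ->
          pl_norm B (fun n => minus (u p n) (u q n)) < eps) ->
      exists a, pl_mem B a /\
        (forall eps, 0 < eps -> exists N, forall p, (N <= p)%nat ->
          pl_norm B (fun n => minus (u p n) (a n)) < eps);
  (* closed subspaces: A (identified with its image under a linear isometric
     embedding j into B) gives X(A) a (closed) subspace of X(B) *)
  pl_subspace : forall (A B : Banach) (j : A -> B), is_linear j ->
      (forall x, norm (j x) = norm x) ->
      forall a, pl_mem A a ->
        pl_mem B (fun n => j (a n)) /\ pl_norm B (fun n => j (a n)) = pl_norm A a;
  pl_const : R;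
  pl_const_pos : 0 < pl_const;
  pl_operator : forall (A B : Banach) (T : A -> B) (M : R), is_linear T ->
      0 <= M -> (forall x, norm (T x) <= M * norm x) ->
      forall a, pl_mem A a ->
        pl_mem B (fun n => T (a n)) /\
        pl_norm B (fun n => T (a n)) <= pl_const * M * pl_norm A a;
  pl_coord : forall (B : Banach) a, pl_mem B a -> forall m, norm (a m) <= pl_norm B a
}.

Definition rot {B : Banach} (tau : R) (b : seqZ B) : seqZ B :=
  fun n => scal (cis (IZR n * tau)) (b n).

Definition rotation_invariant (X : pseudolattice) : Prop :=
  forall (tau : R) (B : Banach),
    (forall b, pl_mem X B b ->
       pl_mem X B (rot tau b) /\ pl_norm X B (rot tau b) = pl_norm X B b) /\
    (forall b, pl_mem X B b -> exists a, pl_mem X B a /\ rot tau a = b).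

Definition rotation_invariant_couple (X0 X1 : pseudolattice) : Prop :=
  rotation_invariant X0 /\ rotation_invariant X1.

(* Complex Banach couple: two Banach spaces linearly and injectively mapped into
   a common complex vector space V, such that the sum B0+B1 is Hausdorff, i.e.
   the K-functional seminorm inf{|x0|+|x1| : x = x0 + x1} vanishes only at 0
   (equivalent to continuous embeddings in a common Hausdorff TVS). *)
Record couple := {
  cV  : ModuleSpace C_Ring;
  cB0 : Banach;
  cB1 : Banach;
  ci0 : cB0 -> cV;
  ci1 : cB1 -> cV;
  ci0_lin : is_linear (ci0 : cB0 -> cV);
  ci1_lin : is_linear (ci1 : cB1 -> cV);
  ci0_inj : forall x y, ci0 x = ci0 y -> x = y;
  ci1_inj : forall x y, ci1 x = ci1 y -> x = y;
  c_hausdorff : forall x : cV,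
      (forall eps, 0 < eps -> exists (x0 : cB0) (x1 : cB1),
          plus (ci0 x0) (ci1 x1) = x /\ norm x0 + norm x1 < eps) ->
      x = zero
}.

Section CoupleDefs.
Variable Bc : couple.

(* y has B0+B1 norm < eps *)
Definition K_small (y : cV Bc) (eps : R) : Prop :=
  exists (y0 : cB0 Bc) (y1 : cB1 Bc),
    plus (ci0 Bc y0) (ci1 Bc y1) = y /\ norm y0 + norm y1 < eps.

(* partial sum  sum_{n=-N}^{M} u_n *)
Definition psumZ (u : Z -> cV Bc) (N M : nat) : cV Bc :=
  sum_n (fun k => u (Z.of_nat k - Z.of_nat N)%Z) (N + M).

Definition seriesZ_conv (u : Z -> cV Bc) (x : cV Bc) : Prop :=
  forall eps, 0 < eps -> exists K0 : nat, forall N M, (K0 <= N)%nat -> (K0 <= M)%nat ->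
    K_small (minus (psumZ u N M) x) eps.

End CoupleDefs.

Section JDefs.
Variables (X0 X1 : pseudolattice) (Bc : couple).

(* {b_n} in J(X, B) with B0-representatives a0 and B1-representatives a1 *)
Definition J_rep (b : Z -> cV Bc) (a0 : seqZ (cB0 Bc)) (a1 : seqZ (cB1 Bc)) : Prop :=
  (forall n, ci0 Bc (a0 n) = b n) /\ (forall n, ci1 Bc (a1 n) = b n) /\
  pl_mem X0 (cB0 Bc) a0 /\
  pl_mem X1 (cB1 Bc) (fun n => scal (RtoC (exp (IZR n))) (a1 n)).

Definition J_norm (a0 : seqZ (cB0 Bc)) (a1 : seqZ (cB1 Bc)) : R :=
  Rmax (pl_norm X0 (cB0 Bc) a0)
       (pl_norm X1 (cB1 Bc) (fun n => scal (RtoC (exp (IZR n))) (a1 n))).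

Definition in_J (b : Z -> cV Bc) : Prop := exists a0 a1, J_rep b a0 a1.

Definition in_Bs (s : C) (x : cV Bc) : Prop :=
  exists b, in_J b /\ seriesZ_conv Bc (fun n => scal (Zpow s n) (b n)) x.

Definition Bs_norm (s : C) (x : cV Bc) : Rbar :=
  Glb_Rbar (fun r => exists b a0 a1, J_rep b a0 a1 /\
              seriesZ_conv Bc (fun n => scal (Zpow s n) (b n)) x /\
              r = J_norm a0 a1).

Definition in_annulus (z : C) : Prop := 1 < Cmod z < exp 1.

Definition holo_at (f : C -> cV Bc) (z : C) : Prop :=
  exists d : cV Bc, forall eps, 0 < eps -> exists delta, 0 < delta /\
    forall h : C, h <> 0%C -> Cmod h < delta ->
      K_small Bc (minus (minus (f (z + h)%C) (f z)) (scal h d)) (eps * Cmod h).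

Definition in_F (f : C -> cV Bc) : Prop :=
  (forall z, in_annulus z -> holo_at f z) /\
  exists b, in_J b /\
    forall z, in_annulus z -> seriesZ_conv Bc (fun n => scal (Zpow z n) (b n)) (f z).

End JDefs.

From Pilot Require Import Defs.
From Stdlib Require Import Reals ZArith Lra Lia FunctionalExtensionality ClassicalEpsilon.
From Coquelicot Require Import Coquelicot.
Open Scope R_scope.

(** Write [s = |s| e^{it}].  Since [s^n = |s|^n e^{int}], a representation
    [x = sum_n s^n b_n] with [{b_n}] in [J(X, B)] is the same as a representation
    [x = sum_n |s|^n (e^{int} b_n)], and by rotation invariance the rotated sequence
    [{e^{int} b_n}] lies in [J(X, B)] with the same norm.  So [s] and [|s|] admit the
    same representations, which gives (iii) and, since [f(s) = sum_n s^n b_n] for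
    [f] in [F_X(B)], also (i).  For (ii) we show that for every [{b_n}] in [J(X, B)]
    the Laurent series [f(z) = sum_n z^n b_n] defines an element of [F_X(B)]: its
    principal part is a power series in [1/z] with coefficients in [B0] and its
    regular part a power series in [z] with coefficients in [B1], the pseudolattice
    axiom [|b_m| <= |{b_n}|] bounds the coefficients geometrically, and a power series
    with such coefficients is differentiable with an [O(|k|^2)] error inside its disc
    of convergence.  Uniqueness of limits in the Hausdorff space [B0 + B1] then gives
    [f(s) = x]. *)

Lemma C_ext (x y : C) : fst x = fst y -> snd x = snd y -> x = y.
Proof. destruct x, y; simpl; intros; subst; reflexivity. Qed.

Lemma cis_0 : cis 0 = 1%C.
Proof. unfold cis; apply C_ext; simpl; [rewrite cos_0 | rewrite sin_0]; ring. Qed.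

Lemma cis_add (a b : R) : cis (a + b) = (cis a * cis b)%C.
Proof. unfold cis; apply C_ext; simpl; [rewrite cos_plus | rewrite sin_plus]; ring. Qed.

Lemma cis_mul_opp (t : R) : (cis t * cis (- t))%C = 1%C.
Proof. rewrite <- cis_add, Rplus_opp_r. exact cis_0. Qed.

Lemma cis_neq_0 (t : R) : cis t <> 0%C.
Proof.
  intro H. pose proof (cis_mul_opp t) as E. rewrite H, Cmult_0_l in E.
  apply (f_equal fst) in E. simpl in E. lra.
Qed.

Lemma Cinv_cis (t : R) : Cinv (cis t) = cis (- t).
Proof.
  rewrite <- (Cmult_1_r (Cinv (cis t))), <- (cis_mul_opp t).
  field. apply cis_neq_0.
Qed.

Definition cpow (w : C) (n : nat) : C := pow_n (K := C_Ring) w n.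

Lemma cpow_S (w : C) (n : nat) : cpow w (S n) = (w * cpow w n)%C.
Proof. reflexivity. Qed.

Lemma Cmod_cpow (w : C) (n : nat) : Cmod (cpow w n) = Cmod w ^ n.
Proof.
  induction n as [|n IH]; [apply Cmod_1|].
  rewrite cpow_S, Cmod_mult, IH. reflexivity.
Qed.

Lemma cpow_neq_0 (w : C) (n : nat) : w <> 0%C -> cpow w n <> 0%C.
Proof.
  intros Hw E. apply (f_equal Cmod) in E. rewrite Cmod_cpow, Cmod_0 in E.
  apply (pow_nonzero (Cmod w) n); [|exact E].
  apply Rgt_not_eq, Cmod_gt_0, Hw.
Qed.

Lemma cpow_mult (a b : C) (n : nat) : cpow (a * b) n = (cpow a n * cpow b n)%C.
Proof.
  induction n as [|n IH].
  - apply C_ext; simpl; ring.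
  - rewrite !cpow_S, IH. ring.
Qed.

Lemma cpow_cis (t : R) (n : nat) : cpow (cis t) n = cis (INR n * t).
Proof.
  induction n as [|n IH].
  - rewrite Rmult_0_l, cis_0. reflexivity.
  - rewrite cpow_S, IH, <- cis_add, S_INR. f_equal. ring.
Qed.

Lemma cpow_inv (z : C) (n : nat) : z <> 0%C -> cpow (Cinv z) n = Cinv (cpow z n).
Proof.
  intro Hz. induction n as [|n IH].
  - apply C_ext; simpl; field.
  - rewrite !cpow_S, IH. field. split; [apply cpow_neq_0, Hz | exact Hz].
Qed.

Lemma Zpow_of_nat (z : C) (n : nat) : Zpow z (Z.of_nat n) = cpow z n.
Proof. destruct n; [reflexivity|]. simpl. rewrite SuccNat2Pos.id_succ. reflexivity. Qed.

Lemma Zpow_neg_succ (z : C) (n : nat) : Zpow z (- Z.of_nat (S n))%Z = Cinv (cpow z (S n)).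
Proof. simpl. rewrite SuccNat2Pos.id_succ. reflexivity. Qed.

Lemma Zpow_rotate (w : C) (t : R) (n : Z) : w <> 0%C ->
  Zpow (w * cis t) n = (Zpow w n * cis (IZR n * t))%C.
Proof.
  intro Hw. destruct n as [|p|p]; simpl.
  - rewrite Rmult_0_l, cis_0. ring.
  - change (cpow (w * cis t) (Pos.to_nat p) = (cpow w (Pos.to_nat p) * cis (IZR (Z.pos p) * t))%C).
    rewrite cpow_mult, cpow_cis, INR_IPR. reflexivity.
  - change (Cinv (cpow (w * cis t) (Pos.to_nat p)) = (Cinv (cpow w (Pos.to_nat p)) * cis (IZR (Z.neg p) * t))%C).
    rewrite cpow_mult, cpow_cis.
    replace (IZR (Z.neg p) * t) with (- (INR (Pos.to_nat p) * t))
      by (rewrite INR_IPR; unfold IZR; ring).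
    rewrite <- Cinv_cis. field. split; [apply cis_neq_0 | apply cpow_neq_0, Hw].
Qed.

Lemma polar (s : C) : s <> 0%C -> exists t, s = (RtoC (Cmod s) * cis t)%C.
Proof.
  intro Hs. destruct s as [x y].
  assert (Hr : 0 < Cmod (x, y)) by (apply Cmod_gt_0; exact Hs).
  set (r := Cmod (x, y)) in *.
  assert (Hr2 : r * r = x * x + y * y).
  { unfold r, Cmod; simpl. rewrite sqrt_sqrt; [ring | nra]. }
  assert (Hc : -1 <= x / r <= 1).
  { split; apply (Rmult_le_reg_r r); try lra; field_simplify; nra. }
  assert (Hsin : sqrt (1 - (x / r)²) = Rabs (y / r)).
  { rewrite <- sqrt_Rsqr_abs. f_equal. unfold Rsqr.
    apply (Rmult_eq_reg_r (r * r)); [field_simplify; lra | nra]. }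
  destruct (Rle_or_lt 0 y) as [Hy | Hy].
  - exists (acos (x / r)). apply C_ext; simpl.
    + rewrite cos_acos by exact Hc. field. lra.
    + rewrite sin_acos, Hsin, Rabs_pos_eq by (exact Hc || apply Rdiv_le_0_compat; lra).
      field. lra.
  - exists (- acos (x / r)). apply C_ext; simpl.
    + rewrite cos_neg, cos_acos by exact Hc. field. lra.
    + rewrite sin_neg, sin_acos, Hsin, Rabs_left by
        (exact Hc || (apply (Rmult_lt_reg_r r); [lra | field_simplify; lra])).
      field. lra.
Qed.

Section Linear.
Context {A B : ModuleSpace C_Ring} (T : A -> B) (HT : Defs.is_linear T).

Lemma lin_plus (x y : A) : T (plus x y) = plus (T x) (T y).
Proof. apply HT. Qed.

Lemma lin_scal (c : C) (x : A) : T (scal c x) = scal c (T x).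
Proof. apply HT. Qed.

Lemma lin_zero : T zero = zero.
Proof. rewrite <- (scal_zero_l (K := C_Ring) (zero : A)), lin_scal. apply scal_zero_l. Qed.

Lemma lin_minus (x y : A) : T (minus x y) = minus (T x) (T y).
Proof.
  unfold minus. rewrite lin_plus, <- !(scal_opp_one (K := C_Ring)), lin_scal.
  reflexivity.
Qed.

Lemma lin_sum_n (f : nat -> A) (N : nat) : T (sum_n f N) = sum_n (fun n => T (f n)) N.
Proof.
  induction N as [|N IH]; [rewrite !sum_O; reflexivity|].
  rewrite !sum_Sn, lin_plus, IH. reflexivity.
Qed.

End Linear.

Lemma minus_plus_plus {G : AbelianGroup} (a b c d : G) :
  minus (plus a b) (plus c d) = plus (minus a c) (minus b d).
Proof.
  unfold minus. rewrite opp_plus, !plus_assoc. f_equal.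
  rewrite <- !plus_assoc. f_equal. apply plus_comm.
Qed.

Lemma couple_minus (Bc : couple) (x0 y0 : cB0 Bc) (x1 y1 : cB1 Bc) :
  minus (plus (ci0 Bc x0) (ci1 Bc x1)) (plus (ci0 Bc y0) (ci1 Bc y1)) =
  plus (ci0 Bc (minus x0 y0)) (ci1 Bc (minus x1 y1)).
Proof.
  rewrite (minus_plus_plus (G := cV Bc)), (lin_minus _ (ci0_lin Bc)), (lin_minus _ (ci1_lin Bc)).
  reflexivity.
Qed.

Definition neg_part {G : AbelianMonoid} (u : Z -> G) (m : nat) : G :=
  match m with O => zero | S m' => u (- Z.of_nat (S m'))%Z end.

Lemma sum_n_shift {G : AbelianMonoid} (a : nat -> G) (n : nat) :
  sum_n a (S n) = plus (a 0%nat) (sum_n (fun k => a (S k)) n).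
Proof. unfold sum_n. rewrite sum_Sn_m, sum_n_m_S by lia. reflexivity. Qed.

Lemma psumZ_split (Bc : couple) (u : Z -> cV Bc) (N M : nat) :
  psumZ Bc u N M = plus (sum_n (neg_part u) N) (sum_n (fun n => u (Z.of_nat n)) M).
Proof.
  unfold psumZ. induction N as [|N IH].
  - rewrite sum_O. simpl neg_part. rewrite plus_zero_l.
    apply sum_n_ext. intro n. f_equal. lia.
  - simpl (S N + M)%nat. rewrite sum_n_shift.
    rewrite (sum_n_ext _ (fun k => u (Z.of_nat k - Z.of_nat N)%Z))
      by (intro n; f_equal; lia).
    rewrite IH, sum_Sn. simpl neg_part.
    replace (Z.of_nat 0 - Z.of_nat (S N))%Z with (- Z.of_nat (S N))%Z by lia.
    rewrite !plus_assoc. f_equal. apply plus_comm.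
Qed.

Lemma seriesZ_conv_ext (Bc : couple) (u v : Z -> cV Bc) (x : cV Bc) :
  (forall n, u n = v n) -> seriesZ_conv Bc u x -> seriesZ_conv Bc v x.
Proof. intro E. replace v with u by (apply functional_extensionality, E). trivial. Qed.

Lemma norm_minus_le {K : AbsRing} {V : NormedModule K} (x y : V) :
  norm (minus x y) <= norm x + norm y.
Proof. unfold minus. rewrite <- (norm_opp y). apply norm_triangle. Qed.

Lemma minus_zero_eq {G : AbelianGroup} (x y : G) : minus x y = zero -> x = y.
Proof.
  intro E. transitivity (plus (minus x y) y).
  - unfold minus. rewrite <- plus_assoc, (plus_opp_l (G := G)), plus_zero_r. reflexivity.
  - rewrite E. apply plus_zero_l.
Qed.

Lemma minus_minus_common {G : AbelianGroup} (p x y : G) :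
  minus (minus p x) (minus p y) = minus y x.
Proof.
  rewrite (minus_trans p y x), plus_comm. unfold minus at 1. rewrite opp_minus.
  reflexivity.
Qed.

(* Limits of two-sided series are unique, because [B0 + B1] is Hausdorff. *)
Lemma seriesZ_unique (Bc : couple) (u : Z -> cV Bc) (x y : cV Bc) :
  seriesZ_conv Bc u x -> seriesZ_conv Bc u y -> x = y.
Proof.
  intros Hx Hy.
  assert (E : minus y x = zero).
  { apply c_hausdorff. intros eps He.
    destruct (Hx (eps / 2)) as [K1 H1]; [lra|].
    destruct (Hy (eps / 2)) as [K2 H2]; [lra|].
    set (N := max K1 K2).
    destruct (H1 N N) as [p0 [p1 [Ep Np]]]; [apply Nat.le_max_l ..|].
    destruct (H2 N N) as [q0 [q1 [Eq Nq]]]; [apply Nat.le_max_r ..|].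
    exists (minus p0 q0), (minus p1 q1). split.
    - rewrite <- couple_minus, Ep, Eq. apply minus_minus_common.
    - apply Rle_lt_trans with (norm p0 + norm q0 + (norm p1 + norm q1));
        [apply Rplus_le_compat;
         [apply (norm_minus_le (V := cB0 Bc)) | apply (norm_minus_le (V := cB1 Bc))]
        | lra]. }
  symmetry. exact (minus_zero_eq y x E).
Qed.

(** * Rotating the coefficients: [B_{X,s}] only depends on [|s|] *)

Definition rotV {V : ModuleSpace C_Ring} (tau : R) (b : Z -> V) : Z -> V :=
  fun n => scal (cis (IZR n * tau)) (b n).

Lemma J_rep_rot (X0 X1 : pseudolattice) (Bc : couple) (tau : R)
    (b : Z -> cV Bc) (a0 : seqZ (cB0 Bc)) (a1 : seqZ (cB1 Bc)) :
  rotation_invariant_couple X0 X1 -> J_rep X0 X1 Bc b a0 a1 ->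
  J_rep X0 X1 Bc (rotV tau b) (rot tau a0) (rot tau a1) /\
  J_norm X0 X1 Bc (rot tau a0) (rot tau a1) = J_norm X0 X1 Bc a0 a1.
Proof.
  intros [R0 R1] [H0 [H1 [M0 M1]]].
  (* the weights [e^n] commute with the rotation *)
  assert (E : (fun n => scal (RtoC (exp (IZR n))) (rot tau a1 n)) =
              rot tau (fun n => scal (RtoC (exp (IZR n))) (a1 n))).
  { apply functional_extensionality. intro n. unfold rot.
    rewrite !scal_assoc. f_equal. apply Cmult_comm. }
  destruct (proj1 (R0 tau (cB0 Bc)) a0 M0) as [M0' N0].
  destruct (proj1 (R1 tau (cB1 Bc)) _ M1) as [M1' N1].
  unfold J_rep, J_norm. rewrite E, N0, N1.
  repeat split; try assumption; intro n; unfold rot, rotV.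
  - rewrite (lin_scal _ (ci0_lin Bc)), H0. reflexivity.
  - rewrite (lin_scal _ (ci1_lin Bc)), H1. reflexivity.
Qed.

Section Representations.
Variables (X0 X1 : pseudolattice) (Bc : couple).
Hypothesis HR : rotation_invariant_couple X0 X1.

(* [Bs_rep s x r]: [x = sum_n s^n b_n] for some [{b_n}] in [J(X, B)] of norm [r];
   [B_{X,s}] is the set of such [x] and its norm is the infimum of such [r]. *)
Definition Bs_rep (s : C) (x : cV Bc) (r : R) : Prop :=
  exists b a0 a1, J_rep X0 X1 Bc b a0 a1 /\
    seriesZ_conv Bc (fun n => scal (Zpow s n) (b n)) x /\ r = J_norm X0 X1 Bc a0 a1.

Lemma in_Bs_iff_rep (s : C) (x : cV Bc) : in_Bs X0 X1 Bc s x <-> exists r, Bs_rep s x r.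
Proof.
  split.
  - intros [b [[a0 [a1 HJ]] Hser]]. exists (J_norm X0 X1 Bc a0 a1), b, a0, a1. auto.
  - intros [r [b [a0 [a1 [HJ [Hser _]]]]]]. exists b. split; [exists a0, a1|]; assumption.
Qed.

Lemma Bs_norm_rep (s : C) (x : cV Bc) : Bs_norm X0 X1 Bc s x = Glb_Rbar (Bs_rep s x).
Proof. reflexivity. Qed.

Lemma Bs_rep_rotate (w : C) (t : R) (x : cV Bc) (r : R) : w <> 0%C ->
  Bs_rep (w * cis t) x r -> Bs_rep w x r.
Proof.
  intros Hw [b [a0 [a1 [HJ [Hser ->]]]]].
  destruct (J_rep_rot X0 X1 Bc t b a0 a1 HR HJ) as [HJ' Hnorm].
  exists (rotV t b), (rot t a0), (rot t a1). split; [exact HJ'|split; [|symmetry; exact Hnorm]].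
  apply (seriesZ_conv_ext _ _ _ _) with (2 := Hser). intro n.
  unfold rotV. rewrite scal_assoc, Zpow_rotate by exact Hw. reflexivity.
Qed.

Lemma Bs_rep_modulus (s : C) (x : cV Bc) (r : R) : s <> 0%C ->
  Bs_rep s x r <-> Bs_rep (RtoC (Cmod s)) x r.
Proof.
  intro Hs. destruct (polar s Hs) as [t Ht].
  assert (Hmod : RtoC (Cmod s) <> 0%C).
  { intro E. apply (f_equal fst) in E. simpl in E.
    apply (Rgt_not_eq _ _ (proj1 (Cmod_gt_0 s) Hs)), E. }
  split; intro H.
  - rewrite Ht in H. exact (Bs_rep_rotate _ t x r Hmod H).
  - apply (Bs_rep_rotate s (- t) x r Hs).
    replace (s * cis (- t))%C with (RtoC (Cmod s)); [exact H|].
    rewrite Ht at 2. rewrite <- Cmult_assoc, cis_mul_opp, Cmult_1_r. reflexivity.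
Qed.

End Representations.

Lemma sum_n_le_series (b : nat -> R) (l : R) :
  (forall n, 0 <= b n) -> is_series b l -> forall N, sum_n b N <= l.
Proof. intros Hb Hl N. rewrite sum_n_Reals. apply sum_incr; [apply is_series_Reals, Hl | exact Hb]. Qed.

Lemma norm_series_le {K : AbsRing} {V : NormedModule K} (a : nat -> V) (l : V) (B : R) :
  is_series a l -> (forall N, norm (sum_n a N) <= B) -> norm l <= B.
Proof.
  intros Hl HB.
  apply (is_lim_seq_le (fun N => norm (sum_n a N)) (fun _ => B) (norm l) B HB).
  - exact (filterlim_comp _ _ _ (sum_n a) norm _ _ _ Hl (filterlim_norm l)).
  - apply is_lim_seq_const.
Qed.

Lemma is_lim_seq_inv_succ : is_lim_seq (fun n => / (INR n + 1)) 0.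
Proof.
  assert (H : is_lim_seq (fun n => INR (S n)) p_infty)
    by apply (is_lim_seq_incr_1 INR), is_lim_seq_INR.
  apply is_lim_seq_inv in H; [|discriminate].
  apply (is_lim_seq_ext (fun n => / INR (S n))); [|exact H].
  intro n. rewrite S_INR. reflexivity.
Qed.

Lemma ex_series_sq_geom (q : R) : 0 < q < 1 -> ex_series (fun n => INR n ^ 2 * q ^ n).
Proof.
  intro Hq.
  set (a := fun n => (INR n + 1) ^ 2 * q ^ n).
  assert (Hpos : forall n, 0 < a n).
  { intro n. unfold a. pose proof (pos_INR n).
    apply Rmult_lt_0_compat; apply pow_lt; lra. }
  assert (Hratio : is_lim_seq (fun n => Rabs (a (S n) / a n)) q).
  { assert (H1 : is_lim_seq (fun n => (1 + / (INR n + 1)) * (1 + / (INR n + 1)) * q)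
                            ((1 + 0) * (1 + 0) * q)).
    { apply is_lim_seq_mult'; [apply is_lim_seq_mult' | apply is_lim_seq_const];
        apply is_lim_seq_plus'; (apply is_lim_seq_const || apply is_lim_seq_inv_succ). }
    replace ((1 + 0) * (1 + 0) * q) with q in H1 by ring.
    apply (is_lim_seq_ext _ _ _) with (2 := H1). intro n.
    rewrite Rabs_pos_eq by (apply Rlt_le, Rdiv_lt_0_compat; apply Hpos).
    unfold a. rewrite S_INR. pose proof (pos_INR n).
    assert (q ^ n <> 0) by (apply pow_nonzero; lra). simpl. field. split; [assumption | lra]. }
  apply (ex_series_le (V := R_CompleteNormedModule) _ (fun n => Rabs (a n)));
    [| apply (ex_series_DAlembert a q (proj2 Hq)); [intro n; apply Rgt_not_eq, Hpos | exact Hratio]].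
  intro n. change (norm (INR n ^ 2 * q ^ n)) with (Rabs (INR n ^ 2 * q ^ n)).
  pose proof (pos_INR n). pose proof (Hpos n).
  rewrite !Rabs_pos_eq by (try apply Rmult_le_pos; try apply pow_le; lra).
  unfold a. apply Rmult_le_compat_r; [apply pow_le; lra | nra].
Qed.

Definition series_sum {V : CompleteNormedModule C_AbsRing} (u : nat -> V) : V :=
  epsilon (inhabits zero) (fun l => is_series u l).

Lemma series_sum_correct {V : CompleteNormedModule C_AbsRing} (u : nat -> V) :
  ex_series u -> is_series u (series_sum u).
Proof. apply epsilon_spec. Qed.

Section PowerSeries.
Context {V : CompleteNormedModule C_AbsRing}.

Definition PS (a : nat -> V) (w : C) : V := series_sum (fun n => scal (cpow w n) (a n)).

(* Cauchy-type coefficient bound [|a_n| <= M / rho^n]: radius of convergence [>= rho]. *)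
Definition geom_bounded (a : nat -> V) (M rho : R) : Prop :=
  forall n, norm (a n) <= M / rho ^ n.

Lemma geom_bounded_nonneg (a : nat -> V) (M rho : R) : geom_bounded a M rho -> 0 <= M.
Proof.
  intro H. specialize (H 0%nat). simpl in H. pose proof (norm_ge_0 (a 0%nat)). lra.
Qed.

Lemma norm_scal_C (c : C) (x : V) : norm (scal c x) <= Cmod c * norm x.
Proof. exact (norm_scal (K := C_AbsRing) c x). Qed.

Lemma PS_correct (a : nat -> V) (M rho : R) (w : C) :
  0 < rho -> geom_bounded a M rho -> Cmod w < rho ->
  is_series (fun n => scal (cpow w n) (a n)) (PS a w).
Proof.
  intros Hr HM Hw. apply series_sum_correct.
  assert (HM0 := geom_bounded_nonneg a M rho HM).
  assert (Hq : 0 <= Cmod w / rho < 1).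
  { split; [apply Rdiv_le_0_compat; [apply Cmod_ge_0 | lra]|].
    apply Rmult_lt_reg_r with rho; [lra|]. field_simplify; lra. }
  apply (ex_series_le _ (fun n => M * (Cmod w / rho) ^ n)).
  - intro n. eapply Rle_trans; [apply norm_scal_C|]. rewrite Cmod_cpow.
    eapply Rle_trans; [apply Rmult_le_compat_l; [apply pow_le, Cmod_ge_0 | apply HM]|].
    unfold Rdiv. rewrite Rpow_mult_distr, pow_inv. right; ring.
  - apply (ex_series_scal_l (V := R_NormedModule) M).
    exists (/ (1 - Cmod w / rho)). apply is_series_geom. rewrite Rabs_pos_eq; lra.
Qed.

End PowerSeries.

(** * Second-order Taylor estimate for [w^n] *)

(* [dpow w n = n w^(n-1)], the derivative of [w^n], defined by the product rule. *)
Fixpoint dpow (w : C) (n : nat) : C :=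
  match n with O => 0%C | S k => (w * dpow w k + cpow w k)%C end.

Definition pow_rem (w k : C) (n : nat) : C :=
  (cpow (w + k) n - cpow w n - k * dpow w n)%C.

Lemma pow_rem_S (w k : C) (n : nat) :
  pow_rem w k (S n) = ((w + k) * pow_rem w k n + k * k * dpow w n)%C.
Proof. unfold pow_rem. rewrite !cpow_S. simpl. ring. Qed.

Lemma dpow_bound (w : C) (R : R) (n : nat) :
  Cmod w <= R -> Cmod (dpow w n) * R <= INR n * R ^ n.
Proof.
  intro HR. assert (Hw := Cmod_ge_0 w).
  induction n as [|n IH]; [simpl; rewrite Cmod_0; lra|].
  simpl dpow. rewrite S_INR.
  eapply Rle_trans; [apply Rmult_le_compat_r; [lra | apply Cmod_triangle]|].
  rewrite Cmod_mult, Cmod_cpow.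
  assert (A : Cmod w * Cmod (dpow w n) * R <= R * (INR n * R ^ n)).
  { rewrite Rmult_assoc. apply Rmult_le_compat; try lra.
    apply Rmult_le_pos; [apply Cmod_ge_0 | lra]. }
  assert (B : Cmod w ^ n * R <= R ^ n * R)
    by (apply Rmult_le_compat_r; [lra | apply pow_incr; lra]).
  simpl. nra.
Qed.

Lemma pow_rem_bound (w k : C) (n : nat) :
  Cmod (pow_rem w k n) * (Cmod w + Cmod k) ^ 2 <=
  INR n ^ 2 * Cmod k ^ 2 * (Cmod w + Cmod k) ^ n.
Proof.
  set (R := Cmod w + Cmod k). assert (Hw := Cmod_ge_0 w). assert (Hk := Cmod_ge_0 k).
  assert (HR : 0 <= R) by (unfold R; lra).
  induction n as [|n IH].
  - replace (pow_rem w k 0) with (RtoC 0) by (apply C_ext; simpl; ring).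
    rewrite Cmod_0. simpl. lra.
  - assert (Hstep : Cmod (pow_rem w k (S n)) <= R * Cmod (pow_rem w k n) + Cmod k ^ 2 * Cmod (dpow w n)).
    { rewrite pow_rem_S. eapply Rle_trans; [apply Cmod_triangle|]. rewrite !Cmod_mult.
      apply Rplus_le_compat; [apply Rmult_le_compat_r; [apply Cmod_ge_0 | apply Cmod_triangle]|].
      right. simpl. ring. }
    assert (D := dpow_bound w R n ltac:(unfold R; lra)).
    assert (X1 : R * (Cmod (pow_rem w k n) * R ^ 2) <= R * (INR n ^ 2 * Cmod k ^ 2 * R ^ n))
      by (apply Rmult_le_compat_l; assumption).
    assert (X2 : Cmod k ^ 2 * (Cmod (dpow w n) * R) * R <= Cmod k ^ 2 * (INR n * R ^ n) * R).
    { apply Rmult_le_compat_r; [exact HR|]. apply Rmult_le_compat_l; [apply pow_le; exact Hk | exact D]. }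
    assert (X3 : 0 <= Cmod k * Cmod k * (R * R ^ n))
      by (apply Rmult_le_pos; [nra | apply Rmult_le_pos; [exact HR | apply pow_le; exact HR]]).
    pose proof (pos_INR n).
    apply Rle_trans with (R * (Cmod (pow_rem w k n) * R ^ 2) + Cmod k ^ 2 * (Cmod (dpow w n) * R) * R).
    + apply Rle_trans with ((R * Cmod (pow_rem w k n) + Cmod k ^ 2 * Cmod (dpow w n)) * R ^ 2).
      * apply Rmult_le_compat_r; [apply pow_le; exact HR | exact Hstep].
      * right. simpl. ring.
    + rewrite S_INR. simpl in *. nra.
Qed.

Definition diff_quadratic {V : NormedModule C_AbsRing} (g : C -> V) (z : C) (d : V) : Prop :=
  exists C0 delta, 0 < delta /\ 0 <= C0 /\
    forall k : C, Cmod k < delta ->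
      norm (minus (minus (g (z + k)%C) (g z)) (scal k d)) <= C0 * Cmod k ^ 2.

Section PowerSeriesDiff.
Context {V : CompleteNormedModule C_AbsRing}.
Variables (a : nat -> V) (M rho : R) (w : C).
Hypotheses (Hrho : 0 < rho) (HM : geom_bounded a M rho) (Hw0 : 0 < Cmod w).

Lemma dpow_term_bound (q : R) (n : nat) :
  Cmod w / rho <= q ->
  norm (scal (dpow w n) (a n)) <= (M / Cmod w) * (INR n ^ 2 * q ^ n).
Proof.
  intro Hq. assert (HM0 := geom_bounded_nonneg a M rho HM).
  assert (E1 : Cmod (dpow w n) <= INR n * Cmod w ^ n / Cmod w).
  { apply Rmult_le_reg_r with (Cmod w); [lra|].
    unfold Rdiv. rewrite Rmult_assoc, Rinv_l, Rmult_1_r by lra. apply dpow_bound, Rle_refl. }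
  eapply Rle_trans; [apply norm_scal_C|].
  eapply Rle_trans; [apply Rmult_le_compat; [apply Cmod_ge_0 | apply norm_ge_0 | exact E1 | apply HM]|].
  replace (INR n * Cmod w ^ n / Cmod w * (M / rho ^ n))
    with ((M / Cmod w) * (INR n * (Cmod w / rho) ^ n))
    by (unfold Rdiv; rewrite Rpow_mult_distr, pow_inv; field; split; [apply pow_nonzero|]; lra).
  apply Rmult_le_compat_l; [apply Rdiv_le_0_compat; lra|].
  assert (Hn : INR n <= INR n ^ 2).
  { destruct n; [simpl; lra|]. pose proof (pos_INR n). rewrite S_INR. simpl. nra. }
  apply Rmult_le_compat; [apply pos_INR | apply pow_le, Rdiv_le_0_compat; [apply Cmod_ge_0 | lra] | exact Hn |].
  apply pow_incr. split; [apply Rdiv_le_0_compat; [apply Cmod_ge_0 | lra] | exact Hq].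
Qed.

Lemma pow_rem_term_bound (k : C) (r' : R) (n : nat) :
  Cmod w + Cmod k <= r' ->
  norm (scal (pow_rem w k n) (a n)) <=
  (M * Cmod k ^ 2 / Cmod w ^ 2) * (INR n ^ 2 * (r' / rho) ^ n).
Proof.
  intro Hr'. set (R := Cmod w + Cmod k) in *.
  assert (Hk := Cmod_ge_0 k). assert (HR : 0 < R) by (unfold R; lra).
  assert (HM0 := geom_bounded_nonneg a M rho HM).
  assert (E1 : Cmod (pow_rem w k n) <= INR n ^ 2 * Cmod k ^ 2 * R ^ n / Cmod w ^ 2).
  { apply Rmult_le_reg_r with (Cmod w ^ 2); [apply pow_lt; lra|].
    unfold Rdiv. rewrite Rmult_assoc, Rinv_l, Rmult_1_r by (apply pow_nonzero; lra).
    eapply Rle_trans; [|apply pow_rem_bound]. fold R.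
    apply Rmult_le_compat_l; [apply Cmod_ge_0|].
    apply pow_incr. split; [lra | unfold R; lra]. }
  eapply Rle_trans; [apply norm_scal_C|].
  eapply Rle_trans; [apply Rmult_le_compat; [apply Cmod_ge_0 | apply norm_ge_0 | exact E1 | apply HM]|].
  replace (INR n ^ 2 * Cmod k ^ 2 * R ^ n / Cmod w ^ 2 * (M / rho ^ n))
    with ((M * Cmod k ^ 2 / Cmod w ^ 2) * (INR n ^ 2 * (R / rho) ^ n))
    by (unfold Rdiv; rewrite Rpow_mult_distr, pow_inv; field;
        repeat split; try apply pow_nonzero; lra).
  apply Rmult_le_compat_l.
  - apply Rdiv_le_0_compat; [apply Rmult_le_pos; [exact HM0 | apply pow_le, Hk] | apply pow_lt; lra].
  - apply Rmult_le_compat_l; [apply pow_le, pos_INR|].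
    apply pow_incr. split; [apply Rdiv_le_0_compat; lra|].
    unfold Rdiv. apply Rmult_le_compat_r; [left; apply Rinv_0_lt_compat|]; lra.
Qed.

Lemma scal_pow_rem (k : C) (n : nat) :
  scal (pow_rem w k n) (a n) =
  minus (minus (scal (cpow (w + k) n) (a n)) (scal (cpow w n) (a n)))
        (scal k (scal (dpow w n) (a n))).
Proof.
  unfold pow_rem. rewrite (scal_assoc (K := C_AbsRing)).
  change (Cminus (Cminus (cpow (w + k) n) (cpow w n)) (Cmult k (dpow w n)))
    with (minus (G := C_AbsRing) (minus (G := C_AbsRing) (cpow (w + k) n) (cpow w n))
                (mult (K := C_AbsRing) k (dpow w n))).
  rewrite !(scal_minus_distr_r (K := C_AbsRing)). reflexivity.
Qed.

(* Inside the disc of convergence (away from 0) the power series has a derivative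
   with quadratic error; the constant comes from [sum n^2 q^n < oo]. *)
Lemma PS_diff_quadratic : Cmod w < rho -> exists d, diff_quadratic (PS a) w d.
Proof.
  intro Hw. assert (HM0 := geom_bounded_nonneg a M rho HM).
  set (r' := (Cmod w + rho) / 2). set (q := r' / rho).
  assert (Hq : 0 < q < 1).
  { unfold q, r'. split; [apply Rdiv_lt_0_compat; lra|].
    apply Rmult_lt_reg_r with rho; [lra|]. field_simplify; lra. }
  assert (Hwq : Cmod w / rho <= q)
    by (unfold q, r', Rdiv; apply Rmult_le_compat_r; [left; apply Rinv_0_lt_compat|]; lra).
  pose proof (ex_series_sq_geom q Hq) as Hsq.
  set (Lsq := Series (fun n => INR n ^ 2 * q ^ n)).
  assert (HS : is_series (fun n => INR n ^ 2 * q ^ n) Lsq) by (apply Series_correct, Hsq).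
  assert (Hnn : forall n, 0 <= INR n ^ 2 * q ^ n)
    by (intro n; apply Rmult_le_pos; apply pow_le; [apply pos_INR | lra]).
  set (d := series_sum (fun n => scal (dpow w n) (a n))).
  assert (Hd : is_series (fun n => scal (dpow w n) (a n)) d).
  { apply series_sum_correct, (ex_series_le _ (fun n => (M / Cmod w) * (INR n ^ 2 * q ^ n))).
    - intro n. exact (dpow_term_bound q n Hwq).
    - exact (ex_series_scal_l (V := R_NormedModule) _ _ Hsq). }
  exists d, (M * Lsq / Cmod w ^ 2), ((rho - Cmod w) / 2). split; [lra | split].
  { apply Rdiv_le_0_compat; [apply Rmult_le_pos; [exact HM0|] | apply pow_lt; lra].
    eapply Rle_trans; [|exact (sum_n_le_series _ _ Hnn HS 0%nat)]. rewrite sum_O. apply Hnn. }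
  intros k Hk.
  assert (Hr' : Cmod w + Cmod k <= r') by (unfold r'; lra).
  assert (Hwk : Cmod (w + k) < rho) by (eapply Rle_lt_trans; [apply Cmod_triangle | unfold r' in Hr'; lra]).
  pose proof (is_series_minus _ _ _ _
    (is_series_minus _ _ _ _ (PS_correct a M rho _ Hrho HM Hwk) (PS_correct a M rho w Hrho HM Hw))
    (is_series_scal k _ _ Hd)) as Hrem.
  apply (norm_series_le (fun n => scal (pow_rem w k n) (a n))).
  { apply (is_series_ext _ _ _) with (2 := Hrem). intro n. symmetry. apply scal_pow_rem. }
  intro N. eapply Rle_trans; [apply norm_sum_n_m|].
  eapply Rle_trans; [apply (sum_n_m_le _ (fun n => (M * Cmod k ^ 2 / Cmod w ^ 2) * (INR n ^ 2 * q ^ n)));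
                     intro n; exact (pow_rem_term_bound k r' n Hr')|].
  change (sum_n_m (fun n => (M * Cmod k ^ 2 / Cmod w ^ 2) * (INR n ^ 2 * q ^ n)) 0 N)
    with (sum_n (fun n => mult (K := R_Ring) (M * Cmod k ^ 2 / Cmod w ^ 2) (INR n ^ 2 * q ^ n)) N).
  rewrite sum_n_mult_l.
  replace (M * Lsq / Cmod w ^ 2 * Cmod k ^ 2) with ((M * Cmod k ^ 2 / Cmod w ^ 2) * Lsq) by (field; lra).
  apply Rmult_le_compat_l; [|exact (sum_n_le_series _ _ Hnn HS N)].
  apply Rdiv_le_0_compat; [apply Rmult_le_pos; [exact HM0 | apply pow_le, Cmod_ge_0] | apply pow_lt; lra].
Qed.

End PowerSeriesDiff.

(** * From quadratic estimates to holomorphy in [B0 + B1] *)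

Lemma minus_scal_regroup {V : ModuleSpace C_Ring} (Z d : V) (h c k : C) :
  minus Z (scal h (scal c d)) = plus (minus Z (scal k d)) (scal (minus k (mult h c)) d).
Proof.
  rewrite (scal_assoc (K := C_Ring)), (scal_minus_distr_r (K := C_Ring)). unfold minus.
  rewrite <- plus_assoc. f_equal. rewrite plus_assoc, (plus_comm (opp (scal k d))).
  rewrite (plus_opp_r (G := V)), plus_zero_l. reflexivity.
Qed.

Lemma diff_quadratic_inv {V : NormedModule C_AbsRing} (g : C -> V) (z : C) (d : V) :
  1 < Cmod z -> diff_quadratic g (/ z)%C d ->
  diff_quadratic (fun u => g (/ u)%C) z (scal (- (/ z * / z))%C d).
Proof.
  intros Hz [C0 [delta [Hdelta [HC0 Hg]]]].
  assert (Hz0 : z <> 0%C) by (intro E; rewrite E, Cmod_0 in Hz; lra).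
  assert (Hd := norm_ge_0 d).
  exists (C0 + norm d), (Rmin delta (Cmod z - 1)).
  split; [apply Rmin_pos; lra | split; [lra|]].
  intros h Hh.
  assert (Hh1 : Cmod h < delta) by (eapply Rlt_le_trans; [exact Hh | apply Rmin_l]).
  assert (Hh2 : Cmod h < Cmod z - 1) by (eapply Rlt_le_trans; [exact Hh | apply Rmin_r]).
  assert (Hzh1 : 1 < Cmod (z + h)).
  { assert (T : Cmod z <= Cmod (z + h) + Cmod (- h)).
    { replace z with ((z + h) + - h)%C at 1 by ring. apply Cmod_triangle. }
    rewrite Cmod_opp in T. lra. }
  assert (Hzh : (z + h)%C <> 0%C) by (intro E; rewrite E, Cmod_0 in Hzh1; lra).
  (* [1/(z+h) = 1/z + k] with [|k| <= |h|] and [k + h/z^2 = O(|h|^2)] *)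
  set (k := (/ (z + h) - / z)%C).
  set (c := minus k (mult h (- (/ z * / z))%C)).
  assert (Hk : Cmod k <= Cmod h).
  { replace k with (- h / (z * (z + h)))%C by (unfold k; field; split; assumption).
    rewrite Cmod_div, Cmod_opp, Cmod_mult by (apply Cmult_neq_0; assumption).
    unfold Rdiv. rewrite <- (Rmult_1_r (Cmod h)) at 2. apply Rmult_le_compat_l; [apply Cmod_ge_0|].
    rewrite <- Rinv_1. apply Rinv_le_contravar; [lra | nra]. }
  assert (Hc : Cmod c <= Cmod h ^ 2).
  { replace c with (h * h / (z * z * (z + h)))%C
      by (unfold c, k, minus, plus, opp, mult; simpl; field; split; assumption).
    rewrite Cmod_div, !Cmod_mult by (repeat apply Cmult_neq_0; assumption).
    unfold Rdiv. replace (Cmod h ^ 2) with (Cmod h * Cmod h * 1) by ring.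
    apply Rmult_le_compat_l; [apply Rmult_le_pos; apply Cmod_ge_0|].
    rewrite <- Rinv_1. apply Rinv_le_contravar; [lra|].
    assert (1 <= Cmod z * Cmod z) by nra. nra. }
  replace (/ (z + h))%C with (/ z + k)%C by (unfold k; ring).
  rewrite (minus_scal_regroup _ d h _ k). fold c.
  eapply Rle_trans; [apply (norm_triangle (V := V))|].
  apply Rle_trans with (C0 * Cmod k ^ 2 + Cmod c * norm d).
  - apply Rplus_le_compat; [apply Hg, Rle_lt_trans with (Cmod h); assumption|].
    apply (norm_scal (K := C_AbsRing)).
  - assert (Cmod k ^ 2 <= Cmod h ^ 2) by (apply pow_incr; split; [apply Cmod_ge_0 | exact Hk]).
    assert (C0 * Cmod k ^ 2 <= C0 * Cmod h ^ 2) by (apply Rmult_le_compat_l; assumption).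
    assert (Cmod c * norm d <= Cmod h ^ 2 * norm d) by (apply Rmult_le_compat_r; assumption).
    lra.
Qed.

Lemma holo_at_of_diff_quadratic (Bc : couple) (g0 : C -> cB0 Bc) (g1 : C -> cB1 Bc)
    (z : C) (d0 : cB0 Bc) (d1 : cB1 Bc) :
  diff_quadratic g0 z d0 -> diff_quadratic g1 z d1 ->
  holo_at Bc (fun u => plus (ci0 Bc (g0 u)) (ci1 Bc (g1 u))) z.
Proof.
  intros [C0 [del0 [Hdel0 [HC0 H0]]]] [C1 [del1 [Hdel1 [HC1 H1]]]].
  exists (plus (ci0 Bc d0) (ci1 Bc d1)). intros eps Heps.
  set (K := C0 + C1 + 1).
  exists (Rmin (Rmin del0 del1) (eps / K)).
  split; [apply Rmin_pos; [apply Rmin_pos | apply Rdiv_lt_0_compat]; unfold K; lra|].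
  intros h Hh0 Hh.
  assert (Hh1 : Cmod h < del0)
    by (eapply Rlt_le_trans; [exact Hh|]; eapply Rle_trans; apply Rmin_l).
  assert (Hh2 : Cmod h < del1)
    by (eapply Rlt_le_trans; [exact Hh|]; eapply Rle_trans; [apply Rmin_l | apply Rmin_r]).
  assert (Hh3 : Cmod h * K < eps).
  { apply Rmult_lt_reg_r with (/ K); [apply Rinv_0_lt_compat; unfold K; lra|].
    rewrite Rmult_assoc, Rinv_r, Rmult_1_r by (unfold K; lra).
    eapply Rlt_le_trans; [exact Hh | apply Rmin_r]. }
  assert (Hhpos : 0 < Cmod h) by (apply Cmod_gt_0, Hh0).
  exists (minus (minus (g0 (z + h)%C) (g0 z)) (scal h d0)).
  exists (minus (minus (g1 (z + h)%C) (g1 z)) (scal h d1)).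
  split.
  - rewrite scal_distr_l, <- (lin_scal _ (ci0_lin Bc)), <- (lin_scal _ (ci1_lin Bc)).
    rewrite !couple_minus. reflexivity.
  - apply Rle_lt_trans with (C0 * Cmod h ^ 2 + C1 * Cmod h ^ 2);
      [apply Rplus_le_compat; [apply H0 | apply H1]; assumption|].
    unfold K in Hh3. simpl. nra.
Qed.

(** * The Laurent series of an element of [J(X, B)] lies in [F_X(B)] *)

Lemma exp_of_nat (n : nat) : exp (IZR (Z.of_nat n)) = exp 1 ^ n.
Proof.
  rewrite <- INR_IZR_INZ. induction n as [|n IH]; [apply exp_0|].
  rewrite S_INR, exp_plus, IH. simpl. ring.
Qed.

Section Laurent.
Variables (X0 X1 : pseudolattice) (Bc : couple) (b : Z -> cV Bc)
  (a0 : seqZ (cB0 Bc)) (a1 : seqZ (cB1 Bc)).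
Hypothesis HJ : J_rep X0 X1 Bc b a0 a1.

(* Coefficients of the principal part (a power series in [1/z], taken in [B0]) and of
   the regular part (a power series in [z], taken in [B1]). *)
Definition coef_neg : nat -> cB0 Bc := neg_part a0.
Definition coef_pos (n : nat) : cB1 Bc := a1 (Z.of_nat n).

(* [|a0_n| <= |{a0_n}|_{X0}]: the principal part converges for [|1/z| < 1]. *)
Lemma coef_neg_bounded : geom_bounded coef_neg (pl_norm X0 (cB0 Bc) a0) 1.
Proof.
  destruct HJ as [_ [_ [M0 _]]]. intro m.
  rewrite pow1, Rdiv_1. destruct m as [|m]; [|apply (pl_coord X0 _ a0 M0)].
  eapply Rle_trans; [right; apply (norm_zero (V := cB0 Bc))|].
  eapply Rle_trans; [apply (norm_ge_0 (a0 0%Z)) | apply (pl_coord X0 _ a0 M0)].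
Qed.

(* [e^n |a1_n| <= |{e^n a1_n}|_{X1}]: the regular part converges for [|z| < e]. *)
Lemma coef_pos_bounded :
  geom_bounded coef_pos (pl_norm X1 (cB1 Bc) (fun n => scal (RtoC (exp (IZR n))) (a1 n))) (exp 1).
Proof.
  destruct HJ as [_ [_ [_ M1]]]. intro n. unfold coef_pos. rewrite <- exp_of_nat.
  set (j := Z.of_nat n). assert (He : 0 < exp (IZR j)) by apply exp_pos.
  replace (a1 j) with (scal (RtoC (/ exp (IZR j))) (scal (RtoC (exp (IZR j))) (a1 j))).
  2: { rewrite (scal_assoc (K := C_AbsRing)).
       replace (mult (K := C_AbsRing) (RtoC (/ exp (IZR j))) (RtoC (exp (IZR j))))
         with (one (K := C_AbsRing)) by (apply C_ext; simpl; field; lra).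
       apply scal_one. }
  eapply Rle_trans; [apply norm_scal_C|].
  rewrite Cmod_R, Rabs_pos_eq, Rmult_comm by (left; apply Rinv_0_lt_compat, He).
  apply Rmult_le_compat_r; [left; apply Rinv_0_lt_compat, He | apply (pl_coord X1 _ _ M1 j)].
Qed.

Definition laurent (z : C) : cV Bc :=
  plus (ci0 Bc (PS coef_neg (/ z)%C)) (ci1 Bc (PS coef_pos z)).

Lemma ci0_coef_neg_term (z : C) (m : nat) : z <> 0%C ->
  ci0 Bc (scal (cpow (/ z)%C m) (coef_neg m)) = neg_part (fun n => scal (Zpow z n) (b n)) m.
Proof.
  destruct HJ as [H0 _]. intro Hz. unfold coef_neg. destruct m as [|m].
  - simpl. rewrite (scal_zero_r (V := cB0 Bc)). apply (lin_zero _ (ci0_lin Bc)).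
  - simpl neg_part. rewrite (lin_scal _ (ci0_lin Bc)), H0, cpow_inv, <- Zpow_neg_succ by exact Hz.
    reflexivity.
Qed.

Lemma ci1_coef_pos_term (z : C) (n : nat) :
  ci1 Bc (scal (cpow z n) (coef_pos n)) = scal (Zpow z (Z.of_nat n)) (b (Z.of_nat n)).
Proof.
  destruct HJ as [_ [H1 _]]. unfold coef_pos.
  rewrite (lin_scal _ (ci1_lin Bc)), H1, Zpow_of_nat. reflexivity.
Qed.

(* On the annulus, [sum_{n in Z} z^n b_n] converges to [laurent z]: the symmetric
   partial sums split into partial sums of the two power series. *)
Lemma laurent_conv (z : C) : in_annulus z ->
  seriesZ_conv Bc (fun n => scal (Zpow z n) (b n)) (laurent z).
Proof.
  intros [Hz1 Hz2]. assert (Hz : z <> 0%C) by (intro E; rewrite E, Cmod_0 in Hz1; lra).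
  assert (Hiz : Cmod (/ z)%C < 1)
    by (rewrite Cmod_inv by exact Hz; rewrite <- Rinv_1; apply Rinv_lt_contravar; lra).
  pose proof (PS_correct _ _ 1 _ Rlt_0_1 coef_neg_bounded Hiz) as S0.
  pose proof (PS_correct _ _ (exp 1) z (exp_pos 1) coef_pos_bounded Hz2) as S1.
  intros eps He.
  destruct (proj1 (filterlim_locally_ball_norm _ _) S0 (mkposreal (eps / 2) ltac:(lra))) as [K0 HK0].
  destruct (proj1 (filterlim_locally_ball_norm _ _) S1 (mkposreal (eps / 2) ltac:(lra))) as [K1 HK1].
  exists (max K0 K1). intros N M HN HM.
  specialize (HK0 N ltac:(lia)). specialize (HK1 M ltac:(lia)).
  unfold ball_norm in HK0, HK1; simpl in HK0, HK1.
  exists (minus (sum_n (fun m => scal (cpow (/ z)%C m) (coef_neg m)) N) (PS coef_neg (/ z)%C)).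
  exists (minus (sum_n (fun n => scal (cpow z n) (coef_pos n)) M) (PS coef_pos z)).
  split; [| apply Rlt_le_trans with (eps / 2 + eps / 2);
           [apply Rplus_lt_compat; [exact HK0 | exact HK1] | lra]].
  rewrite <- couple_minus, psumZ_split, (lin_sum_n _ (ci0_lin Bc)), (lin_sum_n _ (ci1_lin Bc)).
  unfold laurent. do 2 f_equal; apply sum_n_ext; intro n.
  - apply ci0_coef_neg_term, Hz.
  - apply ci1_coef_pos_term.
Qed.

(* On the annulus, [laurent] is holomorphic: the regular part is a power series inside
   its disc of convergence, the principal part one composed with [z |-> 1/z]. *)
Lemma laurent_holo (z : C) : in_annulus z -> holo_at Bc laurent z.
Proof.
  intros [Hz1 Hz2]. assert (Hz : z <> 0%C) by (intro E; rewrite E, Cmod_0 in Hz1; lra).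
  assert (Hiz : 0 < Cmod (/ z)%C < 1).
  { rewrite Cmod_inv by exact Hz. split; [apply Rinv_0_lt_compat; lra|].
    rewrite <- Rinv_1. apply Rinv_lt_contravar; lra. }
  destruct (PS_diff_quadratic coef_neg _ 1 _ Rlt_0_1 coef_neg_bounded (proj1 Hiz) (proj2 Hiz))
    as [d0 Hd0].
  destruct (PS_diff_quadratic coef_pos _ (exp 1) z (exp_pos 1) coef_pos_bounded ltac:(lra) Hz2)
    as [d1 Hd1].
  exact (holo_at_of_diff_quadratic Bc _ _ z _ _ (diff_quadratic_inv _ z d0 Hz1 Hd0) Hd1).
Qed.

End Laurent.

Lemma in_F_of_J (X0 X1 : pseudolattice) (Bc : couple) (b : Z -> cV Bc) :
  in_J X0 X1 Bc b -> exists f, in_F X0 X1 Bc f /\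
    forall z, in_annulus z -> seriesZ_conv Bc (fun n => scal (Zpow z n) (b n)) (f z).
Proof.
  intros [a0 [a1 HJ]]. exists (laurent Bc a0 a1).
  split; [split|].
  - exact (laurent_holo X0 X1 Bc b a0 a1 HJ).
  - exists b. split; [exists a0, a1; exact HJ | exact (laurent_conv X0 X1 Bc b a0 a1 HJ)].
  - exact (laurent_conv X0 X1 Bc b a0 a1 HJ).
Qed.

Theorem lemma2p1 (X0 X1 : pseudolattice) (Bc : couple) :
  rotation_invariant_couple X0 X1 ->
  forall s : C, in_annulus s ->
    (* (i) *)
    (forall f : C -> cV Bc, in_F X0 X1 Bc f -> in_Bs X0 X1 Bc (RtoC (Cmod s)) (f s)) /\
    (* (ii) *)
    (forall x : cV Bc, in_Bs X0 X1 Bc (RtoC (Cmod s)) x ->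
       exists f : C -> cV Bc, in_F X0 X1 Bc f /\ f s = x) /\
    (* (iii) *)
    (forall x : cV Bc,
       (in_Bs X0 X1 Bc s x <-> in_Bs X0 X1 Bc (RtoC (Cmod s)) x) /\
       (in_Bs X0 X1 Bc s x ->
          Bs_norm X0 X1 Bc s x = Bs_norm X0 X1 Bc (RtoC (Cmod s)) x)).
Proof.
  intros HR s Hs.
  assert (Hs0 : s <> 0%C) by (destruct Hs as [H _]; intro E; rewrite E, Cmod_0 in H; lra).
  assert (Hmod : forall x, in_Bs X0 X1 Bc s x <-> in_Bs X0 X1 Bc (RtoC (Cmod s)) x).
  { intro x. rewrite !in_Bs_iff_rep.
    split; intros [r Hr]; exists r; apply (Bs_rep_modulus X0 X1 Bc HR s x r Hs0), Hr. }
  split; [|split].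
  - intros f [_ [b [HJ Hser]]]. apply Hmod. exists b. split; [exact HJ | exact (Hser s Hs)].
  - intros x Hx. apply Hmod in Hx. destruct Hx as [b [HJ Hser]].
    destruct (in_F_of_J X0 X1 Bc b HJ) as [f [Hf Hfser]].
    exists f. split; [exact Hf | exact (seriesZ_unique Bc _ _ _ (Hfser s Hs) Hser)].
  - intro x. split; [apply Hmod | intros _].
    rewrite !Bs_norm_rep. apply Glb_Rbar_eqset. intro r.
    exact (Bs_rep_modulus X0 X1 Bc HR s x r Hs0).
Qed.
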